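(* Let $L$ be a finite lattice, $\varphi\in M_1(L)$, and $a_1,\dots,a_n\in L$ with $n\ge2$. If $a_n\le a_i$ for some $i\le n-1$, then $\Lambda_{a_1,\ldots,a_n}\varphi=\Lambda_{a_1,\ldots,a_{n-1}}\varphi$.
   Context: $L$ is a finite lattice with join $\vee$. $M_1(L)$ is the set of nonnegative monotone real functions on $L$. A path from $a$ to $b$ is a sequence $H=(h_0,\dots,h_m)$ of distinct elements of $L$ with $h_0=a$, $h_m=b$ ($m\ge0$); $\varphi(H)=\sum_{i=0}^m\varphi(h_i)-\sum_{i=1}^m\varphi(h_{i-1}\vee h_i)$; $\lambda(\varphi;a,b)=\max\{\varphi(H): H\text{ a path from }a\text{ to }b\}$. The $\lambda$-difference operator is $\Lambda_a\varphi(x)=\varphi(x)-\lambda(\varphi;a,x)$; it maps $M_1(L)$ into itself. Successive $\lambda$-differences are $\Lambda_{a_1,\ldots,a_n}\varphi=\Lambda_{a_n}(\Lambda_{a_1,\ldots,a_{n-1}}\varphi)$. *)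

From mathcomp Require Import all_boot all_order all_algebra.
From mathcomp Require Import reals.
Set Implicit Arguments. Unset Strict Implicit. Unset Printing Implicit Defensive.
Import Order.TTheory GRing.Theory Num.Theory.
Local Open Scope ring_scope.
Local Open Scope order_scope.

Section LambdaDiff.
Variables (d : Order.disp_t) (L : finLatticeType d) (R : realType).

Definition M1 (phi : L -> R) : Prop :=
  (forall x, (0 <= phi x)%R) /\ (forall x y : L, x <= y -> (phi x <= phi y)%R).

Definition pathval (phi : L -> R) (h : L) (hs : seq L) : R :=
  (\sum_(x <- h :: hs) phi x - \sum_(p <- zip (h :: hs) hs) phi (p.1 `|` p.2))%R.

Definition pathvalS (phi : L -> R) (s : seq L) : R :=
  if s is h :: hs then pathval phi h hs else 0%R.

Definition is_path (a b : L) (s : seq L) : bool :=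
  [&& uniq s, head a s == a, last a s == b & size s != 0%N].

(* A path has
   distinct elements, hence length m+1 <= #|L|; we range over all tuples of
   such lengths.  The initial value is the value of a genuine path
   ([a] if a = b, [a;b] otherwise), so it does not change the maximum. *)
Definition lambda (phi : L -> R) (a b : L) : R :=
  \big[Num.max/pathvalS phi (if a == b then [:: a] else [:: a; b])]_(m < #|L|)
    \big[Num.max/pathvalS phi (if a == b then [:: a] else [:: a; b])]_(t : (m.+1).-tuple L | is_path a b t)
       pathvalS phi t.

Definition Lam (a : L) (phi : L -> R) : L -> R := fun x => (phi x - lambda phi a x)%R.

Definition Lams (s : seq L) (phi : L -> R) : L -> R := foldl (fun f a => Lam a f) phi s.

End LambdaDiff.

(* Every lambda-difference maps M_1(L) into itself and only lowers values, because
   0 <= lambda(phi; a, x) <= phi x.  Moreover Lambda_a phi vanishes at a, since the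
   one-point path gives lambda(phi; a, a) >= phi a.  So after applying Lambda_{a_i},
   all later differences vanish at a_i, hence by monotonicity at every a_n <= a_i.
   Finally Lambda_b psi = psi whenever psi b = 0, because
   0 <= lambda(psi; b, x) <= psi b. *)

From mathcomp Require Import all_boot all_order all_algebra.
From mathcomp Require Import reals.
From mathcomp Require Import ring lra.
From Stdlib Require Import FunctionalExtensionality.
Import Order.TTheory GRing.Theory Num.Theory.
Local Open Scope order_scope.

Set Implicit Arguments. Unset Strict Implicit.

Section LambdaDifference.
Variables (d : Order.disp_t) (L : finLatticeType d) (R : realType).
Implicit Types (phi : L -> R) (a b x y h : L) (s p q hs : seq L).

Lemma pathval_nil phi h : pathval phi h [::] = phi h.
Proof. by rewrite /pathval big_cons !big_nil /= subr0 addr0. Qed.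

Lemma pathval_cons phi h h' hs :
  pathval phi h (h' :: hs) = (phi h - phi (h `|` h') + pathval phi h' hs)%R.
Proof. by rewrite /pathval /= !big_cons /=; ring. Qed.

Lemma pathval_rcons phi h p x :
  pathval phi h (rcons p x) = (pathval phi h p + phi x - phi (last h p `|` x))%R.
Proof.
elim: p h => [|h' p IHp] h /=; first by rewrite !pathval_cons !pathval_nil; ring.
by rewrite !pathval_cons IHp; ring.
Qed.

Lemma pathval_cat phi h p x q :
  pathval phi h (p ++ x :: q) = (pathval phi h (rcons p x) + pathval phi x q - phi x)%R.
Proof.
elim: p h => [|h' p IHp] h /=; first by rewrite !pathval_cons pathval_nil; ring.
by rewrite !pathval_cons IHp; ring.
Qed.

Section Monotone.
Variables (phi : L -> R) (phi_mono : {homo phi : x y / x <= y}).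

Lemma pathval_le_head h hs : pathval phi h hs <= phi h.
Proof.
elim: hs h => [|h' hs IHhs] h; first by rewrite pathval_nil.
rewrite pathval_cons; have := IHhs h'; have /= := phi_mono (leUr h' h); lra.
Qed.

Lemma pathval_le_last h hs : pathval phi h hs <= phi (last h hs).
Proof.
elim: hs h => [|h' hs IHhs] h; first by rewrite pathval_nil.
rewrite pathval_cons /=; have := IHhs h'; have /= := phi_mono (leUl h h'); lra.
Qed.

End Monotone.

Lemma is_path_default a b : is_path a b (if a == b then [:: a] else [:: a; b]).
Proof.
rewrite /is_path; case: eqP => [->|/eqP neq_ab] /=; first by rewrite !eqxx.
by rewrite inE neq_ab !eqxx.
Qed.

Lemma lambda_ge_pathval phi a b s : is_path a b s -> pathvalS phi s <= lambda phi a b.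
Proof.
move=> path_s; case/and4P: (path_s) => uniq_s _ _ size_s.
set m := (size s).-1.
have size_sE : size s == m.+1 by rewrite /m prednK // lt0n.
have lt_m : (m < #|L|)%N.
  by rewrite /m prednK ?lt0n // -(card_uniqP uniq_s) max_card.
rewrite /lambda (bigmax_sup (Ordinal lt_m)) //.
by have -> : pathvalS phi s = pathvalS phi (Tuple size_sE) by []; exact: le_bigmax_cond.
Qed.

Lemma lambda_le phi a b B :
  (forall s, is_path a b s -> pathvalS phi s <= B) -> lambda phi a b <= B.
Proof.
move=> le_B; rewrite /lambda; apply: bigmax_le => [|m _]; first exact/le_B/is_path_default.
by apply: bigmax_le => [|t]; [exact/le_B/is_path_default | exact: le_B].
Qed.

Lemma lambda_le_head phi a x : {homo phi : x y / x <= y} -> lambda phi a x <= phi a.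
Proof.
move=> phi_mono; apply: lambda_le => -[|h hs] /and4P[_ /eqP /= head_s _ _] //=.
by rewrite -head_s; apply: pathval_le_head.
Qed.

Lemma lambda_le_last phi a x : {homo phi : x y / x <= y} -> lambda phi a x <= phi x.
Proof.
move=> phi_mono; apply: lambda_le => -[|h hs] /and4P[_ _ /eqP <- _] //=.
exact: pathval_le_last.
Qed.

Lemma lambda_self_ge phi a : phi a <= lambda phi a a.
Proof.
by have := @lambda_ge_pathval phi a a [:: a]; rewrite /= pathval_nil /is_path /= eqxx; apply.
Qed.

Lemma lambda_ge0 phi a x : M1 phi -> (0 <= lambda phi a x)%R.
Proof.
case=> phi_ge0 _; have [<-|neq_ax] := eqVneq a x.
  exact: le_trans (phi_ge0 a) (lambda_self_ge phi a).
have path2 : is_path a x [:: a; x] by rewrite /is_path /= inE !eqxx !andbT.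
have [le_ax|nle_ax] := boolP (a <= x).
  apply: le_trans (lambda_ge_pathval phi path2).
  by rewrite /= pathval_cons pathval_nil join_r //; have := phi_ge0 a; lra.
have [le_xa|nle_xa] := boolP (x <= a).
  apply: le_trans (lambda_ge_pathval phi path2).
  by rewrite /= pathval_cons pathval_nil join_l //; have := phi_ge0 x; lra.
(* for incomparable a, x the path [a; a `&` x; x] has value phi (a `&` x) *)
have path3 : is_path a x [:: a; a `&` x; x].
  rewrite /is_path /= !inE !eqxx /= !andbT (negbTE neq_ax) orbF.
  apply/andP; split; apply/eqP => eq_meet.
  - by move: nle_ax; rewrite eq_meet leIr.
  - by move: nle_xa; rewrite -eq_meet leIl.
apply: le_trans (lambda_ge_pathval phi path3).
rewrite /= !pathval_cons pathval_nil (join_l (leIl a x)) (join_r (leIr x a)).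
by have := phi_ge0 (a `&` x); lra.
Qed.

(* A path to y either passes through x <= y, or can be redirected to end at x. *)
Lemma lambda_le_shift phi a x y : {homo phi : x y / x <= y} -> x <= y ->
  lambda phi a y <= (lambda phi a x + phi y - phi x)%R.
Proof.
move=> phi_mono le_xy; have le_phi := phi_mono _ _ le_xy.
apply: lambda_le => s path_s; case/and4P: (path_s) => uniq_s head_s last_s size_s.
have [x_in_s|x_notin_s] := boolP (x \in s).
  case/splitPr: x_in_s uniq_s head_s => p q uniq_s head_s.
  have path_px : is_path a x (rcons p x).
    rewrite /is_path last_rcons eqxx size_rcons andbT; apply/andP; split.
      by move: uniq_s; rewrite -cats1 -cat1s catA cat_uniq => /and3P[].
    by case: (p) head_s.
  have := lambda_ge_pathval phi path_px; have := pathval_le_head phi_mono x q.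
  by case: (p) => [|h p'] /=; rewrite ?pathval_nil ?pathval_cat; lra.
case: s path_s uniq_s head_s last_s size_s x_notin_s => [|h hs] // _ uniq_s.
move=> /eqP head_s /eqP /= last_s _ x_notin_s.
have path_sx : is_path a x (rcons (h :: hs) x).
  rewrite /is_path rcons_uniq x_notin_s uniq_s last_rcons size_rcons eqxx andbT /=.
  by rewrite andbT -head_s.
have := lambda_ge_pathval phi path_sx.
by rewrite /= pathval_rcons last_s (join_l le_xy); lra.
Qed.

Lemma M1_Lam phi a : M1 phi -> M1 (Lam a phi).
Proof.
move=> [phi_ge0 phi_mono]; split => [x|x y le_xy]; rewrite /Lam.
  by have := lambda_le_last a x phi_mono; lra.
by have := lambda_le_shift a phi_mono le_xy; lra.
Qed.

Lemma Lam_le phi a x : M1 phi -> Lam a phi x <= phi x.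
Proof. by move=> M1phi; rewrite /Lam gerDl oppr_le0 lambda_ge0. Qed.

Lemma Lam_self phi a : (Lam a phi a <= 0)%R.
Proof. by rewrite /Lam subr_le0 lambda_self_ge. Qed.

Lemma Lam_id phi b : M1 phi -> phi b = 0%R -> Lam b phi = phi.
Proof.
move=> M1phi phi_b0; apply: functional_extensionality => x; rewrite /Lam.
have := lambda_ge0 b x M1phi; have := lambda_le_head b x (proj2 M1phi).
by rewrite phi_b0; lra.
Qed.

Lemma Lams_cat s t phi : Lams (s ++ t) phi = Lams t (Lams s phi).
Proof. exact: foldl_cat. Qed.

Lemma M1_Lams s phi : M1 phi -> M1 (Lams s phi).
Proof. by elim: s phi => //= b s IHs phi M1phi; apply/IHs/M1_Lam. Qed.

Lemma Lams_le s phi x : M1 phi -> Lams s phi x <= phi x.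
Proof.
elim: s phi => //= b s IHs phi M1phi.
exact: le_trans (IHs _ (M1_Lam b M1phi)) (Lam_le b x M1phi).
Qed.

Lemma Lams_mem_eq0 s phi a : M1 phi -> a \in s -> Lams s phi a = 0%R.
Proof.
move=> M1phi /splitPr[p q]; rewrite Lams_cat /=.
have M1p := M1_Lams p M1phi; apply/le_anti/andP; split.
  exact: le_trans (Lams_le q a (M1_Lam a M1p)) (Lam_self _ a).
by case: (M1_Lams q (M1_Lam a M1p)).
Qed.

Lemma Lams_rcons_below s phi a b : M1 phi -> a \in s -> b <= a ->
  Lams (rcons s b) phi = Lams s phi.
Proof.
move=> M1phi a_in_s le_ba; rewrite -cats1 Lams_cat /=.
have [psi_ge0 psi_mono] := M1_Lams s M1phi.
apply: Lam_id; first exact: M1_Lams.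
apply/le_anti; rewrite psi_ge0 andbT -(Lams_mem_eq0 M1phi a_in_s).
exact: psi_mono.
Qed.

End LambdaDifference.

Theorem lemma3p14 (d : Order.disp_t) (L : finLatticeType d) (R : realType)
  (phi : L -> R) (n : nat) (a : nat -> L) :
  M1 phi -> (2 <= n)%N ->
  (exists i, (1 <= i <= n.-1)%N /\ a n <= a i) ->
  Lams [seq a k | k <- iota 1 n] phi = Lams [seq a k | k <- iota 1 n.-1] phi.
Proof.
move=> M1phi le2n [i [/andP[le1i le_in] le_ani]].
have iotaE : iota 1 n = rcons (iota 1 n.-1) n.
  by rewrite -[in LHS](prednK (ltnW le2n)) -[n.-1.+1]addn1 iotaD /= cats1 add1n prednK // ltnW.
rewrite iotaE map_rcons (Lams_rcons_below M1phi _ le_ani) // map_f //.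
by rewrite mem_iota le1i add1n ltnS.
Qed.
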